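(* Let $E$ be a complex vector space of dimension $e$, let $U$ be a complex orthogonal vector space of dimension $2k+1$ ($k\ge1$), and let $V=\operatorname{Sym}(E\otimes U)$ with the commuting actions of $\mathfrak{g}=\mathfrak{so}(U)$ and $H=\mathfrak{gl}(E)$. Write $U=\mathbf{C}\oplus(U_1\oplus U_1^* )\oplus\cdots\oplus(U_k\oplus U_k^* )$, where $U_i,U_i^*$ are isotropic lines paired by the form, $\mathbf{C}$ is a non-isotropic line, and the summands are mutually orthogonal; let the Cartan subalgebra of $\mathfrak{so}(U)$ be the elements preserving each of these lines, with weights identified with $k$-tuples via $\varepsilon_i$ = weight on $U_i$. For $n\in\mathbf{Z}$ let $L_n=\bigoplus_{d\ge0}\operatorname{Sym}^d(E)\otimes\operatorname{Sym}^{d+n}(E)$ (with $\operatorname{Sym}^m=0$ for $m<0$). Then for every $\chi\in\mathbf{Z}^k$, as $H$-representations, \[ V_\chi\cong \operatorname{Sym}(E)\otimes L_{\chi_1}\otimes\cdots\otimes L_{\chi_k}. \]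
   Context: $V_\chi$ denotes the $\chi$-weight space of $V$ for the Cartan subalgebra described in the claim. *)

From HB Require Import structures.
From mathcomp Require Import all_boot all_order all_algebra.
From mathcomp Require Import complex mxtens.
From mathcomp Require Import reals.
From mathcomp Require Import mpoly.
Set Implicit Arguments. Unset Strict Implicit. Unset Printing Implicit Defensive.
Import GRing.Theory Num.Theory.
Local Open Scope ring_scope.

Section Defs.
Variable C : fieldType.

(* Action of gl(W), W = C^N with basis the variables 'X_r, on Sym(W) =
   {mpoly C[N]}: the derivation extending  x_s |-> \sum_r M r s x_r. *)
Definition symder (N : nat) (M : 'M[C]_N) (p : {mpoly C[N]}) : {mpoly C[N]} :=
  \sum_(r < N) \sum_(s < N) M r s *: ('X_r * mderiv s p).

Variables (e k : nat).
(* U = C^(2k+1), basis u_0, u_1, u_1^*, ..., u_k, u_k^* :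
   index 0 = non-isotropic line C, 2i+1 = U_(i+1), 2i+2 = U_(i+1)^*. *)
Notation u := (2 * k).+1.
Definition uidx (i : 'I_k) : 'I_u := inord (2 * i + 1).
Definition udidx (i : 'I_k) : 'I_u := inord (2 * i + 2).

Definition gramU : 'M[C]_u := \matrix_(r, s)
  (((r == ord0) && (s == ord0)) ||
   [exists i : 'I_k, ((r == uidx i) && (s == udidx i)) ||
                     ((r == udidx i) && (s == uidx i))])%:R.

Definition soU : pred 'M[C]_u := fun X => X^T *m gramU + gramU *m X == 0.

(* Cartan subalgebra: elements of so(U) preserving each of the lines
   C u_0, C u_i, C u_i^*, i.e. diagonal in this basis. *)
Definition cartanU : pred 'M[C]_u := fun X => soU X && is_diag_mx X.

Definition weight_of (chi : 'I_k -> int) (X : 'M[C]_u) : C :=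
  \sum_(i < k) (chi i)%:~R * X (uidx i) (uidx i).

(* V = Sym(E (x) U) with E = C^e; E (x) U = C^(e*u) via mxtens_index. *)
Definition Vsp := {mpoly C[e * u]}.

Definition actH (A : 'M[C]_e) (p : {mpoly C[e * u]}) : {mpoly C[e * u]} :=
  symder (A *t (1%:M : 'M[C]_u)) p.

Definition actG (X : 'M[C]_u) (p : {mpoly C[e * u]}) : {mpoly C[e * u]} :=
  symder ((1%:M : 'M[C]_e) *t X) p.

Definition weight_space (chi : 'I_k -> int) (p : {mpoly C[e * u]}) : Prop :=
  forall X : 'M[C]_u, cartanU X -> actG X p = weight_of chi X *: p.

(* Tensor products of symmetric algebras are realized through the canonical
   identification Sym(E) (x) ... (x) Sym(E) (2k+1 factors) = Sym(E (x) C^(2k+1))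
   (same polynomial ring as V, but a different role of the slots):
     slot 0      <-> the factor Sym(E),
     slot 2i+1   <-> the factor Sym^d(E)     of L_(chi_i),
     slot 2i+2   <-> the factor Sym^(d+n)(E) of L_(chi_i).
   blockdeg m j = total degree of the monomial m in slot j. *)
Definition blockdeg (mon : 'X_{1..e * u}) (j : 'I_u) : nat :=
  (\sum_(a < e) mon (mxtens_index (a, j)))%N.

Definition rhs_space (chi : 'I_k -> int) (q : {mpoly C[e * u]}) : Prop :=
  forall mon, mon \in msupp q -> forall i : 'I_k,
    (blockdeg mon (udidx i))%:Z = (blockdeg mon (uidx i))%:Z + chi i.

(* H acts diagonally on the tensor product, i.e. by A (x) 1 on E (x) C^(2k+1);
   this is again [actH]. *)
Definition H_iso (P Q : {mpoly C[e * u]} -> Prop) : Prop :=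
  exists f : {linear {mpoly C[e * u]} -> {mpoly C[e * u]}},
    [/\ forall p, P p -> Q (f p),
        forall p1 p2, P p1 -> P p2 -> f p1 = f p2 -> p1 = p2,
        forall q, Q q -> exists2 p, P p & f p = q
      & forall (A : 'M[C]_e) p, P p -> f (actH A p) = actH A (f p)].
End Defs.

From HB Require Import structures.
From mathcomp Require Import all_boot all_order all_algebra all_fingroup.
From mathcomp Require Import complex mxtens.
From mathcomp Require Import reals.
From mathcomp Require Import mpoly.
From mathcomp Require Import zify.
Set Implicit Arguments. Unset Strict Implicit. Unset Printing Implicit Defensive.
Import GRing.Theory Num.Theory.
Local Open Scope ring_scope.

(* A diagonal element of so(U) has diagonal (0, t_1, -t_1, ..., t_k, -t_k), so it
   acts on a monomial of Sym(E (x) U) whose slot degrees are d_0, d_i (on E (x) U_i)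
   and d_i^* (on E (x) U_i^* ) by the scalar \sum_i t_i (d_i - d_i^* ).  Hence V_chi
   is spanned by the monomials with d_i - d_i^* = chi_i, whereas the right-hand side
   is spanned by those with d_i^* - d_i = chi_i.  The substitution exchanging u_i and
   u_i^* is an algebra automorphism of Sym(E (x) U) commuting with gl(E), and it maps
   the first family of monomials onto the second. *)

Lemma sum_nat_pairs (V : nmodType) (G : nat -> V) n :
  \sum_(0 <= j < (2 * n).+1) G j = G 0%N + \sum_(0 <= i < n) (G (2 * i + 1)%N + G (2 * i + 2)%N).
Proof.
elim: n => [|n IH]; first by rewrite big_nat1 big_geq // addr0.
have -> : (2 * n.+1).+1 = (2 * n).+3 by lia.
rewrite big_nat_recr //= big_nat_recr //= IH big_nat_recr //= -!addrA.
by congr (_ + (_ + _)); congr (_ + _); congr G; lia.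
Qed.

Section Slots.
Variable k : nat.
Local Notation u := (2 * k).+1.

Lemma uidxE (i : 'I_k) : uidx i = (2 * i + 1)%N :> nat.
Proof. by rewrite /uidx inordK //; have := ltn_ord i; lia. Qed.

Lemma udidxE (i : 'I_k) : udidx i = (2 * i + 2)%N :> nat.
Proof. by rewrite /udidx inordK //; have := ltn_ord i; lia. Qed.

Lemma uidx_inj : injective (@uidx k).
Proof. by move=> i j /(congr1 val); rewrite /= !uidxE => eq_ij; apply: val_inj => /=; lia. Qed.

Lemma udidx_inj : injective (@udidx k).
Proof. by move=> i j /(congr1 val); rewrite /= !udidxE => eq_ij; apply: val_inj => /=; lia. Qed.

Lemma eq_uidx_udidx (i j : 'I_k) : (uidx i == udidx j) = false.
Proof. by apply/eqP => /(congr1 val); rewrite /= uidxE udidxE; lia. Qed.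

Lemma eq_udidx_uidx (i j : 'I_k) : (udidx i == uidx j) = false.
Proof. by rewrite eq_sym eq_uidx_udidx. Qed.

Lemma eq_uidx0 (i : 'I_k) : (uidx i == ord0) = false.
Proof. by apply/eqP => /(congr1 val); rewrite /= uidxE; lia. Qed.

Lemma eq_udidx0 (i : 'I_k) : (udidx i == ord0) = false.
Proof. by apply/eqP => /(congr1 val); rewrite /= udidxE; lia. Qed.

Lemma sum_slots (V : nmodType) (F : 'I_u -> V) :
  \sum_j F j = F ord0 + \sum_(i < k) (F (uidx i) + F (udidx i)).
Proof.
pose G n := F (inord n).
have -> : \sum_j F j = \sum_(0 <= n < u) G n.
  by rewrite big_mkord; apply: eq_bigr => j _; rewrite /G inord_val.
have -> : F ord0 = G 0%N by congr F; apply: val_inj; rewrite /= inordK.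
by rewrite sum_nat_pairs big_mkord.
Qed.

(* Fixes slot 0 and exchanges slots 2i+1 and 2i+2, read off from n = i.+1. *)
Definition swap_slotn (n : nat) : nat := if n is i.+1 then (if odd i then i else i.+2) else 0.

Lemma swap_slotnK : involutive swap_slotn.
Proof.
case=> [|i] //=; case: ifP => [|/= -> //].
by case: i => [|i] //= /negbTE ->.
Qed.

Lemma swap_slotn_lt n : (n < u)%N -> (swap_slotn n < u)%N.
Proof.
case: n => [|i] //=; case: ifP => [_|oi]; first lia.
by have := odd_double_half i; rewrite oi -mul2n; lia.
Qed.

Definition swap_slot (j : 'I_u) : 'I_u := inord (swap_slotn j).

Lemma swap_slotE j : swap_slot j = swap_slotn j :> nat.
Proof. by rewrite /swap_slot inordK // swap_slotn_lt. Qed.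

Lemma swap_slotK : involutive swap_slot.
Proof. by move=> j; apply: val_inj; rewrite /= !swap_slotE swap_slotnK. Qed.

Lemma swap_slot_uidx (i : 'I_k) : swap_slot (uidx i) = udidx i.
Proof. by apply: val_inj; rewrite /= swap_slotE uidxE udidxE addn1 /= oddM addn2. Qed.

Lemma swap_slot_udidx (i : 'I_k) : swap_slot (udidx i) = uidx i.
Proof. by rewrite -swap_slot_uidx swap_slotK. Qed.

End Slots.

Section DerivationAction.
Variables (C : fieldType) (N : nat).
Implicit Types (p : {mpoly C[N]}) (M D : 'M[C]_N) (m : 'X_{1..N}).

Lemma symder_is_linear M : linear (symder M).
Proof.
move=> a p q; rewrite /symder scaler_sumr -big_split; apply: eq_bigr => r _ /=.
rewrite scaler_sumr -big_split; apply: eq_bigr => s _ /=.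
by rewrite linearP mulrDr -scalerAr scalerDr !scalerA mulrC.
Qed.

HB.instance Definition _ M := GRing.isLinear.Build C {mpoly C[N]} {mpoly C[N]}
  *:%R (symder M) (symder_is_linear M).

Lemma mulX_mderivX r m : 'X_r * mderiv r 'X_[m] = (m r)%:R *: 'X_[m] :> {mpoly C[N]}.
Proof.
rewrite mderivX -scalerAr -mpolyXD; have [->|mr_gt0] := posnP (m r).
  by rewrite !scale0r.
congr (_ *: 'X_[_]); apply/mnmP => i; rewrite mnmDE mnmBE mnm1E.
by case: eqP => [<-|_]; lia.
Qed.

Lemma symder_diagX D m : is_diag_mx D ->
  symder D 'X_[m] = (\sum_r D r r * (m r)%:R) *: 'X_[m].
Proof.
move=> /is_diag_mxP D_diag; rewrite /symder scaler_suml; apply: eq_bigr => r _.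
rewrite (bigD1 r) //= big1 ?addr0 => [|s sr]; last first.
  by rewrite D_diag ?scale0r // eq_sym.
by rewrite mulX_mderivX scalerA.
Qed.

Lemma mcoeff_eigen (f : {linear {mpoly C[N]} -> {mpoly C[N]}}) (w : 'X_{1..N} -> C) :
  (forall m, f 'X_[m] = w m *: 'X_[m]) -> forall p m, (f p)@_m = w m * p@_m.
Proof.
move=> fX p m; elim/mpolyind: p => [|c m' p _ _ IHp].
  by rewrite linear0 mcoeff0 mulr0.
rewrite linearP fX !mcoeffD !mcoeffZ !mcoeffX IHp mulrDr; congr (_ + _).
by case: eqP => [->|_]; rewrite ?mulr0 // mulrCA.
Qed.

Lemma mcoeff_symder_diag D p m : is_diag_mx D ->
  (symder D p)@_m = (\sum_r D r r * (m r)%:R) * p@_m.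
Proof.
move=> D_diag; pose w m' := \sum_r D r r * (m' r)%:R.
exact: (@mcoeff_eigen (symder D) w (fun m' => symder_diagX m' D_diag)).
Qed.

Local Notation "m # s" := [multinom m (s i) | i < N]
  (at level 40, left associativity, format "m # s").

Lemma mderiv_msym (s : 'S_N) t p : mderiv (s t) (msym s p) = msym s (mderiv t p).
Proof.
apply/mpolyP => m; rewrite mcoeff_sym !mcoeff_mderiv mcoeff_sym mnmE.
by congr (p@__ *+ _); apply/mnmP => i; rewrite !mnmE (inj_eq perm_inj).
Qed.

Lemma msym_symder (s : 'S_N) M p : (forall a b, M (s a) (s b) = M a b) ->
  msym s (symder M p) = symder M (msym s p).
Proof.
move=> M_inv; rewrite /symder raddf_sum [RHS](reindex_inj (@perm_inj _ s)).
apply: eq_bigr => r _; rewrite raddf_sum [RHS](reindex_inj (@perm_inj _ s)).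
apply: eq_bigr => t _ /=; rewrite msymZ msymM mderiv_msym M_inv msymX.
congr (_ *: (_ * _)); congr 'X_[_]; apply/mnmP => i.
by rewrite !mnmE -(inj_eq (@perm_inj _ s)) permKV.
Qed.

Lemma msupp_msym (s : 'S_N) p m : (m \in msupp (msym s p)) = (m # s \in msupp p).
Proof. by rewrite !mcoeff_msupp mcoeff_sym. Qed.

End DerivationAction.

Section TensorSlots.
Variables (C : fieldType) (e k : nat).
Local Notation u := (2 * k).+1.
Local Notation N := (e * u)%N.
Local Notation "m # s" := [multinom m (s i) | i < N]
  (at level 40, left associativity, format "m # s").

Definition swap_tens_fun (x : 'I_N) : 'I_N :=
  mxtens_index ((mxtens_unindex x).1, swap_slot (mxtens_unindex x).2).

Lemma swap_tens_funK : involutive swap_tens_fun.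
Proof. by move=> x; case: (mxtens_indexP x) => a j; rewrite /swap_tens_fun !mxtens_indexK /= swap_slotK. Qed.

Definition swap_tens : 'S_N := perm (inv_inj swap_tens_funK).

Lemma swap_tens_index a j : swap_tens (mxtens_index (a, j)) = mxtens_index (a, swap_slot j).
Proof. by rewrite permE /swap_tens_fun mxtens_indexK. Qed.

Lemma msym_swap_tensK : involutive (msym swap_tens : {mpoly C[N]} -> {mpoly C[N]}).
Proof.
have swap2 : (swap_tens * swap_tens = 1)%g.
  by apply/permP => x; rewrite permM perm1 !permE swap_tens_funK.
by move=> p; rewrite -msymMm swap2 msym1m.
Qed.

Lemma tensmx1_swap (A : 'M[C]_e) x y :
  (A *t 1%:M) (swap_tens x) (swap_tens y) = (A *t (1%:M : 'M[C]_u)) x y.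
Proof.
case: (mxtens_indexP x) => a j; case: (mxtens_indexP y) => b l.
by rewrite !swap_tens_index !tensmxE !mxE (inj_eq (inv_inj (@swap_slotK k))).
Qed.

Lemma blockdeg_swap (m : 'X_{1..N}) j : blockdeg (m # swap_tens) j = blockdeg m (swap_slot j).
Proof. by apply: eq_bigr => a _; rewrite mnmE swap_tens_index. Qed.

Lemma tens1mx_diag (X : 'M[C]_u) : is_diag_mx X -> is_diag_mx ((1%:M : 'M[C]_e) *t X).
Proof.
move=> /is_diag_mxP X_diag; apply/is_diag_mxP => x y.
case: (mxtens_indexP x) => a j; case: (mxtens_indexP y) => b l neq.
rewrite tensmxE mxE; have [eq_ab|] := eqVneq a b; last by rewrite mul0r.
by rewrite X_diag ?mulr0 //; apply: contraNneq neq => /val_inj ->; rewrite eq_ab.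
Qed.

Lemma sum_tens1mx_diag (X : 'M[C]_u) (m : 'X_{1..N}) :
  \sum_x ((1%:M : 'M[C]_e) *t X) x x * (m x)%:R = \sum_j X j j * (blockdeg m j)%:R.
Proof.
pose F x := ((1%:M : 'M[C]_e) *t X) x x * (m x)%:R.
rewrite (reindex (@mxtens_index e u)); last first.
  by exists (@mxtens_unindex e u) => x _; rewrite (mxtens_indexK, mxtens_unindexK).
transitivity (\sum_(a < e) \sum_(j < u) F (mxtens_index (a, j))).
  by rewrite pair_big; apply: eq_bigr => -[].
rewrite exchange_big; apply: eq_bigr => j _; rewrite /blockdeg natr_sum mulr_sumr.
by apply: eq_bigr => a _; rewrite /F tensmxE mxE eqxx mul1r.
Qed.

Lemma mcoeff_actG (X : 'M[C]_u) (p : {mpoly C[N]}) m : is_diag_mx X ->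
  (actG X p)@_m = (\sum_j X j j * (blockdeg m j)%:R) * p@_m.
Proof. by move=> X_diag; rewrite mcoeff_symder_diag ?sum_tens1mx_diag ?tens1mx_diag. Qed.

Definition charge (m : 'X_{1..N}) (i : 'I_k) : int :=
  (blockdeg m (uidx i))%:Z - (blockdeg m (udidx i))%:Z.

Lemma charge_swap (m : 'X_{1..N}) i : charge (m # swap_tens) i = - charge m i.
Proof. by rewrite /charge !blockdeg_swap swap_slot_uidx swap_slot_udidx opprB. Qed.

Lemma msym_swap_charge (c : 'I_k -> int) (p : {mpoly C[N]}) :
  {in msupp p, forall m, charge m =1 c} ->
  {in msupp (msym swap_tens p), forall m, charge m =1 (fun i => - c i)}.
Proof. by move=> pc m; rewrite msupp_msym => /pc cm i; rewrite -cm charge_swap opprK. Qed.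

End TensorSlots.

Section CartanWeights.
Variables (C : numFieldType) (e k : nat).
Local Notation u := (2 * k).+1.
Local Notation N := (e * u)%N.
Implicit Types (X : 'M[C]_u) (chi : 'I_k -> int) (p : {mpoly C[N]}) (m : 'X_{1..N}).

Lemma soU_diag_entry X r t : is_diag_mx X ->
  (X^T *m gramU C k + gramU C k *m X) r t = gramU C k r t * (X r r + X t t).
Proof.
move=> /is_diag_mxP X_diag; rewrite [LHS]mxE [Y in Y + _]mxE [Y in _ + Y]mxE.
rewrite (bigD1 r) //= [Y in _ + Y](bigD1 t) //= !big1.
- by rewrite !addr0 mxE mulrDr mulrC.
- by move=> l lt; rewrite X_diag ?mulr0.
- by move=> l lr; rewrite mxE X_diag ?mul0r // eq_sym.
Qed.

Lemma cartanU_diag X : cartanU X ->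
  X ord0 ord0 = 0 /\ forall i, X (udidx i) (udidx i) = - X (uidx i) (uidx i).
Proof.
case/andP => /eqP X_so X_diag.
have gram_sum r t : gramU C k r t * (X r r + X t t) = 0.
  by rewrite -soU_diag_entry // X_so mxE.
split.
  by have /eqP := gram_sum ord0 ord0; rewrite mxE !eqxx /= mul1r -mulr2n mulrn_eq0 => /eqP.
move=> i; have gram_pair : gramU C k (uidx i) (udidx i) = 1.
  rewrite mxE; case: existsP => [_|no_pair]; first by rewrite orbT.
  by case: no_pair; exists i; rewrite !eqxx.
have /eqP := gram_sum (uidx i) (udidx i).
by rewrite gram_pair mul1r addr_eq0 => /eqP ->; rewrite opprK.
Qed.

Lemma mcoeff_actG_cartan X p m : cartanU X ->
  (actG X p)@_m = (\sum_i X (uidx i) (uidx i) * (charge m i)%:~R) * p@_m.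
Proof.
move=> X_cartan; rewrite mcoeff_actG; last by case/andP: X_cartan.
have [X0 Xd] := cartanU_diag X_cartan; rewrite sum_slots X0 mul0r add0r.
congr (_ * _); apply: eq_bigr => i _.
by rewrite Xd mulNr -mulrBr /charge mulrzBr -!pmulrn.
Qed.

Definition cartan_gen (i : 'I_k) : 'M[C]_u :=
  diag_mx (\row_j ((j == uidx i)%:R - (j == udidx i)%:R)).

Lemma cartan_gen_cartan i : cartanU (cartan_gen i).
Proof.
rewrite /cartanU diag_mx_is_diag andbT; apply/eqP/matrixP => r t.
rewrite soU_diag_entry ?diag_mx_is_diag // !mxE !eqxx !mulr1n.
case: orP => [[/andP[/eqP-> /eqP->]|/existsP[j /orP[]/andP[/eqP-> /eqP->]]]|_]; last by rewrite mul0r.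
- by rewrite !(eq_sym ord0) eq_uidx0 eq_udidx0 subrr addr0 mulr0.
all: by rewrite !(inj_eq (@uidx_inj _)) !(inj_eq (@udidx_inj _)) eq_uidx_udidx eq_udidx_uidx
  subr0 sub0r ?addrN ?addNr mulr0.
Qed.

Lemma cartan_gen_uidx i l : cartan_gen i (uidx l) (uidx l) = (l == i)%:R.
Proof. by rewrite !mxE eqxx mulr1n (inj_eq (@uidx_inj _)) eq_uidx_udidx subr0. Qed.

Lemma sum_cartan_gen i (c : 'I_k -> int) :
  \sum_l cartan_gen i (uidx l) (uidx l) * (c l)%:~R = (c i)%:~R.
Proof.
rewrite (bigD1 i) //= big1 ?addr0 => [|l /negbTE l_i].
  by rewrite cartan_gen_uidx eqxx mul1r.
by rewrite cartan_gen_uidx l_i mul0r.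
Qed.

Lemma weight_spaceP chi p :
  weight_space chi p <-> {in msupp p, forall m, charge m =1 chi}.
Proof.
split=> [p_chi m m_supp i | p_chi X X_cartan].
  have := congr1 (mcoeff m) (p_chi _ (cartan_gen_cartan i)).
  rewrite mcoeff_actG_cartan ?cartan_gen_cartan // mcoeffZ => /mulIf.
  rewrite -mcoeff_msupp => /(_ m_supp); rewrite sum_cartan_gen /weight_of.
  by under [RHS]eq_bigr do rewrite mulrC; rewrite sum_cartan_gen => /intr_inj.
apply/mpolyP => m; rewrite mcoeff_actG_cartan // mcoeffZ.
have [m_supp|] := boolP (m \in msupp p); last first.
  by rewrite mcoeff_msupp negbK => /eqP->; rewrite !mulr0.
congr (_ * _); apply: eq_bigr => i _; by rewrite p_chi // mulrC.
Qed.

Lemma rhs_spaceP chi p :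
  rhs_space chi p <-> {in msupp p, forall m, charge m =1 (fun i => - chi i)}.
Proof.
rewrite /charge; split=> p_rhs m m_supp i; have := p_rhs m m_supp i; lia.
Qed.

End CartanWeights.

Theorem mainTheorem8 (R : realType) (e k : nat) (hk : (0 < k)%N)
  (chi : 'I_k -> int) :
  @H_iso R[i] e k (@weight_space R[i] e k chi) (@rhs_space R[i] e k chi).
Proof.
exists (msym (swap_tens e k)); split.
- by move=> p /weight_spaceP /msym_swap_charge /rhs_spaceP.
- by move=> p1 p2 _ _; apply: inj_msym.
- move=> q /rhs_spaceP /msym_swap_charge q_chi.
  exists (msym (swap_tens e k) q); last exact: msym_swap_tensK.
  by apply/weight_spaceP => m /q_chi m_chi i; rewrite m_chi opprK.
- by move=> A p _; apply: msym_symder; apply: tensmx1_swap.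
Qed.
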